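(* Let $\Delta$ be a pure $d$-dimensional APC simplicial complex, $0\le i<d$, let $\Upsilon$ be an $i$-dimensional spanning tree of $\Delta$ with $\tilde H_{i-1}(\Upsilon;\mathbb{Z})=0$, and let $\Theta=\Delta_i\setminus\Upsilon_i$. Then, with $L=L_{\Delta,i}$, $$L\big(C_i(\Delta;\mathbb{Z})\big)=L\big(C_i(\Theta;\mathbb{Z})\big),$$ where $C_i(\Theta;\mathbb{Z})\subseteq C_i(\Delta;\mathbb{Z})$ is the span of the faces in $\Theta$.
   Context: For a finite simplicial complex $\Delta$, $\Delta_i$ is its set of $i$-faces, $\Delta_{(i)}$ its $i$-skeleton, $f_i=|\Delta_i|$. $C_i(\Delta;\mathbb{Z})$ is free abelian on the (fixed-orientation) $i$-faces, $\partial_{\Delta,i}$ the simplicial boundary map, and $\partial^*_{\Delta,i}$ its transpose. The combinatorial Laplacian is $L_{\Delta,i}=\partial_{i+1}\partial^*_{i+1}:C_i(\Delta;\mathbb{Z})\to C_i(\Delta;\mathbb{Z})$. $\tilde H$ is reduced homology, $\beta_i=\dim_\mathbb{Q}\tilde H_i(\cdot;\mathbb{Q})$. A pure $d$-dimensional complex is APC if $\tilde H_j(\Delta;\mathbb{Q})=0$ for all $j<d$. For a pure $k$-dimensional complex $\Gamma$, a subcomplex $\Upsilon$ with $\Upsilon_{(k-1)}=\Gamma_{(k-1)}$ is a spanning tree if $\tilde H_k(\Upsilon;\mathbb{Z})=0$, $\tilde H_{k-1}(\Upsilon;\mathbb{Q})=0$, and $f_k(\Upsilon)=f_k(\Gamma)-\beta_k(\Gamma)+\beta_{k-1}(\Gamma)$;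 an $i$-dimensional spanning tree of $\Delta$ is a spanning tree of $\Delta_{(i)}$. *)

From HB Require Import structures.
From mathcomp Require Import all_boot all_order all_algebra.
Set Implicit Arguments. Unset Strict Implicit. Unset Printing Implicit Defensive.
Import Order.TTheory GRing.Theory Num.Theory.
Local Open Scope ring_scope.

(* Abstract simplicial complexes on the vertex set 'I_n, given by their set of
   faces (including the empty face, so that reduced homology is the homology of
   the augmented chain complex).  Faces are indexed by their SIZE k = dim + 1. *)

Definition is_complex n (K : {set {set 'I_n}}) : Prop :=
  forall F G : {set 'I_n}, F \in K -> G \subset F -> G \in K.

Definition subcomplex n (U K : {set {set 'I_n}}) : Prop :=
  is_complex U /\ U \subset K.

Definition fcs n (K : {set {set 'I_n}}) (k : nat) : {set {set 'I_n}} :=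
  [set F in K | #|F| == k].

Definition skel n (K : {set {set 'I_n}}) (i : nat) : {set {set 'I_n}} :=
  [set F in K | #|F| <= i.+1]%N.

Definition skel_sz n (K : {set {set 'I_n}}) (s : nat) : {set {set 'I_n}} :=
  [set F in K | #|F| <= s]%N.

(* incidence sign [F : G] for G a codimension-one face of F, using the
   orientation induced by the order of 'I_n: removing the j-th smallest
   vertex (0-based) gives sign (-1)^j. *)
Definition bsign (R : nzRingType) n (G F : {set 'I_n}) : R :=
  \prod_(v in F :\: G) (-1) ^+ #|[set u in F | (u < v)%N]|.

(* boundary matrix from chains on faces of size k+1 to chains on faces of
   size k (chains are column vectors indexed by enum of the face set);
   this is partial_{k} in dimension indexing *)
Definition bdm (R : nzRingType) n (K : {set {set 'I_n}}) (k : nat)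
  : 'M[R]_(#|fcs K k|, #|fcs K k.+1|) :=
  \matrix_(a < #|fcs K k|, b < #|fcs K k.+1|)
    (let G := enum_val (A := fcs K k) a in
     let F := enum_val (A := fcs K k.+1) b in
     if G \subset F then bsign R G F else 0).

Definition rkQ n (K : {set {set 'I_n}}) (k : nat) : nat :=
  \rank (bdm rat K k).

(* reduced rational Betti number in dimension k-1 (faces of size k):
   dim ker - dim im, computed over Q *)
Definition betti n (K : {set {set 'I_n}}) (k : nat) : nat :=
  (#|fcs K k| - (if k is k'.+1 then rkQ K k' else 0%N) - rkQ K k)%N.

Definition is_cycle (R : nzRingType) n (K : {set {set 'I_n}}) (k : nat)
  : 'cV[R]_#|fcs K k| -> Prop :=
  match k return 'cV[R]_#|fcs K k| -> Prop with
  | 0%N => fun _ => True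
  | k'.+1 => fun c => bdm R K k' *m c = 0
  end.

(* reduced integral homology in dimension k-1 vanishes *)
Definition Zacyclic n (K : {set {set 'I_n}}) (k : nat) : Prop :=
  forall c : 'cV[int]_#|fcs K k|, is_cycle c ->
    exists b : 'cV[int]_#|fcs K k.+1|, bdm int K k *m b = c.

Definition pure n (K : {set {set 'I_n}}) (d : nat) : Prop :=
  (exists F, F \in K /\ #|F| = d.+1) /\
  forall F, F \in K -> exists G, [/\ G \in K, F \subset G & #|G| = d.+1].

(* APC: reduced rational homology vanishes in all dimensions j < d,
   i.e. for all sizes k = j+1 <= d (including j = -1) *)
Definition APC n (K : {set {set 'I_n}}) (d : nat) : Prop :=
  forall k : nat, (k <= d)%N -> betti K k = 0%N.

Definition spanning_tree n (G : {set {set 'I_n}}) (k : nat)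
  (U : {set {set 'I_n}}) : Prop :=
  [/\ subcomplex U G,
      skel_sz U k = skel_sz G k,
      Zacyclic U k.+1,
      betti U k = 0%N &
      (#|fcs U k.+1|%:Z = #|fcs G k.+1|%:Z - (betti G k.+1)%:Z + (betti G k)%:Z)].

(* combinatorial Laplacian L_{K,i} = d_{i+1} d_{i+1}^* on C_i *)
Definition laplacian n (K : {set {set 'I_n}}) (i : nat)
  : 'M[int]_#|fcs K i.+1| :=
  bdm int K i.+1 *m (bdm int K i.+1)^T.

From HB Require Import structures.
From mathcomp Require Import all_boot all_order all_algebra.
Set Implicit Arguments. Unset Strict Implicit. Unset Printing Implicit Defensive.
Import Order.TTheory GRing.Theory Num.Theory.
Local Open Scope ring_scope.

(* The Laplacian L = d_{i+1} d_{i+1}^T kills every coboundary d_i^T e, because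
   d_i d_{i+1} = 0, so it suffices to make an arbitrary i-chain c vanish on the
   i-faces of the tree U by subtracting a coboundary.  U has no (i+1)-faces, so
   H_i(U; Z) = 0 makes its boundary d_{U,i} injective, and H_{i-1}(U; Z) = 0 makes
   its image saturated (torsion-free cokernel); by the Smith normal form d_{U,i}^T
   is then onto.  Since U and D share their (i-1)-faces, a preimage e of the
   restriction of c to U_i gives the required coboundary. *)

Lemma big_inj_pred1 (R : Type) (idx : R) (op : Monoid.law idx) (I : finType)
    (T : eqType) (f : I -> T) (F : I -> R) (i : I) :
  injective f -> \big[op/idx]_(j | f j == f i) F j = F i.
Proof.
by move=> f_inj; rewrite (big_pred1 i) // => j; rewrite /= (inj_eq f_inj).
Qed.

Definition mx_saturated m p (A : 'M[int]_(m, p)) : Prop :=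
  forall (k : int) (y : 'cV[int]_m) (x : 'cV[int]_p),
    k != 0 -> A *m x = k *: y -> exists x' : 'cV[int]_p, A *m x' = y.

Section SmithForm.

Variables (m p : nat) (d : seq int).

(* The diagonal factor of int_Smith_normal_form. *)
Let S : 'M[int]_(m, p) := \matrix_(i, j) (d`_i *+ (i == j :> nat)).

Lemma smith_mulE (v : 'cV[int]_p) (a : 'I_m) :
  (S *m v) a 0 = d`_a * \sum_(j : 'I_p | j == a :> nat) v j 0.
Proof.
rewrite mxE mulr_sumr [RHS]big_mkcond; apply: eq_bigr => j _.
by rewrite mxE eq_sym; case: eqP; rewrite ?mulr1n ?mulr0n ?mul0r.
Qed.

Lemma smith_tr_mulE (v : 'cV[int]_m) (j : 'I_p) :
  (S^T *m v) j 0 = \sum_(a : 'I_m | a == j :> nat) d`_a * v a 0.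
Proof.
rewrite mxE [RHS]big_mkcond; apply: eq_bigr => a _.
by rewrite !mxE; case: eqP; rewrite ?mulr1n ?mulr0n ?mul0r.
Qed.

Lemma smith_coef_unit (A : 'M[int]_(m, p)) (L : 'M[int]_m) (R : 'M[int]_p) :
    L \in unitmx -> R \in unitmx -> A = L *m S *m R ->
    (forall x : 'cV[int]_p, A *m x = 0 -> x = 0) -> mx_saturated A ->
  forall j : 'I_p, exists2 k : 'I_m, k = j :> nat & d`_j \is a GRing.unit.
Proof.
move=> uL uR dA A_inj A_sat j.
pose ej : 'cV[int]_p := delta_mx j 0.
pose x := invmx R *m ej.
have Ax : A *m x = L *m (S *m ej).
  by rewrite dA /x -!mulmxA (mulmxA R) mulmxV // mul1mx.
have Sj_neq0 : S *m ej != 0.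
  apply/eqP=> Sj0.
  have /(congr1 (mulmx R)) : x = 0 by apply: A_inj; rewrite Ax Sj0 mulmx0.
  rewrite /x mulmxA mulmxV // mul1mx mulmx0 => /matrixP/(_ j 0).
  by rewrite !mxE !eqxx => /eqP; rewrite oner_eq0.
have SjE (a : 'I_m) : (S *m ej) a 0 = d`_a * (j == a :> nat)%:R.
  rewrite smith_mulE big_mkcond (bigD1 j) //= big1 ?addr0 => [|i ij].
    by rewrite mxE !eqxx; case: eqP.
  by rewrite mxE (negbTE ij); case: ifP.
have [k kj] : exists k : 'I_m, k = j :> nat.
  case: (ltnP j m) => [jm|mj]; first by exists (Ordinal jm).
  case/eqP: Sj_neq0; apply/matrixP=> a b; rewrite (ord1 b) SjE mxE.
  by case: eqP => [ja|]; rewrite ?mulr0 //; have := ltn_ord a; rewrite -ja ltnNge mj.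
exists k => //.
have Sjk : S *m ej = d`_j *: (delta_mx k 0 : 'cV[int]_m).
  apply/matrixP=> a b; rewrite (ord1 b) SjE !mxE eqxx andbT.
  case: (eqVneq a k) => [->|ne]; first by rewrite kj !eqxx.
  by rewrite -kj (inj_eq val_inj) eq_sym (negbTE ne) !mulr0.
have dj_neq0 : d`_j != 0 by apply: contraNneq Sj_neq0 => dj0; rewrite Sjk dj0 scale0r.
have [x' Ax'] : exists x', A *m x' = L *m (delta_mx k 0 : 'cV[int]_m).
  by apply: (A_sat _ _ x dj_neq0); rewrite Ax Sjk scalemxAr.
have : S *m (R *m x') = (delta_mx k 0 : 'cV[int]_m).
  by apply: (can_inj (mulKmx uL)); rewrite !mulmxA -dA Ax'.
move/matrixP/(_ k 0); rewrite smith_mulE !mxE !eqxx kj => e.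
by apply/unitrPr; eexists; exact: e.
Qed.

Lemma smith_tr_surjective :
    (forall j : 'I_p, exists2 k : 'I_m, k = j :> nat & d`_j \is a GRing.unit) ->
  forall z : 'cV[int]_p, exists v : 'cV[int]_m, S^T *m v = z.
Proof.
move=> d_unit z.
exists (\col_a ((d`_a)^-1 * \sum_(j : 'I_p | j == a :> nat) z j 0)).
apply/matrixP=> j b; rewrite (ord1 b) smith_tr_mulE.
have [k kj dj_unit] := d_unit j.
rewrite (big_pred1 k) => [|a]; last by rewrite /= -kj.
rewrite mxE (big_pred1 j) => [|i]; last by rewrite /= kj.
by rewrite kj mulKr.
Qed.

End SmithForm.

Lemma saturated_tr_surjective m p (A : 'M[int]_(m, p)) :
    (forall x : 'cV[int]_p, A *m x = 0 -> x = 0) -> mx_saturated A ->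
  forall w : 'cV[int]_p, exists u : 'cV[int]_m, A^T *m u = w.
Proof.
move=> A_inj A_sat w.
have [L uL [R uR [d _ dA]]] := int_Smith_normal_form A.
have d_unit := smith_coef_unit uL uR dA A_inj A_sat.
have [v Sv] := smith_tr_surjective d_unit (invmx R^T *m w).
exists (invmx L^T *m v).
rewrite dA !trmx_mul -!mulmxA (mulmxA L^T) mulmxV ?unitmx_tr // mul1mx Sv.
by rewrite mulmxA mulmxV ?unitmx_tr // mul1mx.
Qed.

Definition incid (R : nzRingType) n (G F : {set 'I_n}) : R :=
  if G \subset F then bsign R G F else 0.

Lemma bdmE (R : nzRingType) n (K : {set {set 'I_n}}) k a b :
  bdm R K k a b = incid R (enum_val a) (enum_val b).
Proof. by rewrite mxE. Qed.

Definition nbelow n (A : {set 'I_n}) (v : 'I_n) : nat :=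
  #|[set u in A | (u < v)%N]|.

Lemma setU1D (T : finType) (x : T) (A : {set T}) :
  x \notin A -> (x |: A) :\: A = [set x].
Proof.
move=> xA; apply/setP=> u; rewrite !inE.
by case: (eqVneq u x) => [->|]; rewrite ?xA ?andNb.
Qed.

Lemma incid_setU1 (R : nzRingType) n (x : 'I_n) (A : {set 'I_n}) :
  x \notin A -> incid R A (x |: A) = (-1) ^+ nbelow (x |: A) x.
Proof. by move=> xA; rewrite /incid subsetU1 /bsign setU1D // big_set1. Qed.

Lemma nbelow_setU1 n (A : {set 'I_n}) (z v : 'I_n) :
  z \notin A -> nbelow (z |: A) v = ((z < v)%N + nbelow A v)%N.
Proof.
move=> zA; rewrite /nbelow; case: ltnP => zv.
  have -> : [set u in z |: A | (u < v)%N] = z |: [set u in A | (u < v)%N].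
    by apply/setP=> u; rewrite !inE; case: (eqVneq u z) => [->|]; rewrite ?zv.
  by rewrite cardsU1 inE (negbTE zA).
apply: eq_card => u; rewrite !inE.
by case: (eqVneq u z) => [->|]; rewrite ?ltnNge ?zv ?(negbTE zA).
Qed.

Lemma incid_setU2_cancel (R : comNzRingType) n (H : {set 'I_n}) (x y : 'I_n) :
    (x < y)%N -> x \notin H -> y \notin H ->
  incid R H (x |: H) * incid R (x |: H) (x |: (y |: H))
    + incid R H (y |: H) * incid R (y |: H) (x |: (y |: H)) = 0.
Proof.
move=> xy xH yH.
have xy_neq : x != y by apply: contraTneq xy => ->; rewrite ltnn.
have yxH : y \notin x |: H by rewrite !inE negb_or yH eq_sym xy_neq.
have xyH : x \notin y |: H by rewrite !inE negb_or xH xy_neq.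
rewrite [in X in _ + X]incid_setU1 // [in X in X + _]setUCA !incid_setU1 //.
rewrite !nbelow_setU1 // !ltnn xy ltnNge (ltnW xy) /=.
by rewrite exprS mulN1r mulrN [X in _ + X]mulrC addNr.
Qed.

Lemma setU1_between n (H G : {set 'I_n}) (x y : 'I_n) :
    H \subset G -> G \subset x |: (y |: H) -> #|G| = #|H|.+1 ->
  G = x |: H \/ G = y |: H.
Proof.
move=> HG GF cardG.
have /cards1P[z GHz] : #|G :\: H| == 1 by rewrite cardsD (setIidPr HG) cardG subSnn.
have GE : G = z |: H by rewrite -(setID G H) (setIidPr HG) GHz setUC.
have : z \in x |: (y |: H) by apply: (subsetP GF); rewrite GE setU11.
have zH : z \notin H by have := set11 z; rewrite -GHz inE => /andP[].
by rewrite !inE (negbTE zH) orbF GE => /orP[] /eqP->; [left | right].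
Qed.

Lemma sum_incid_mul_eq0 (R : comNzRingType) n (K : {set {set 'I_n}}) k
    (H F : {set 'I_n}) :
    is_complex K -> F \in K -> #|H| = k -> #|F| = k.+2 ->
  \sum_(G in fcs K k.+1) incid R H G * incid R G F = 0.
Proof.
move=> K_cx FK cardH cardF.
have [HF|HF] := boolP (H \subset F); last first.
  apply: big1 => G _; rewrite /incid.
  case: ifP => [HG|_]; rewrite ?mul0r //; case: ifP => [GF|_]; rewrite ?mulr0 //.
  by rewrite (subset_trans HG GF) in HF.
have /cards2P[x [y [xy FHxy]]] : #|F :\: H| == 2.
  by rewrite cardsD (setIidPr HF) cardF cardH -addn2 addKn.
wlog ltxy : x y xy FHxy / (x < y)%N.
  move=> wlog_xy; have [|ltyx] := ltnP x y; first exact: wlog_xy.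
  apply: (wlog_xy y x); [by rewrite eq_sym | by rewrite setUC |].
  by rewrite ltn_neqAle ltyx andbT; apply: contra xy => /eqP/val_inj->.
have xyFH z : z \in F :\: H -> z \in F /\ z \notin H by rewrite inE => /andP[].
have [xF xH] : x \in F /\ x \notin H by apply: xyFH; rewrite FHxy set21.
have [yF yH] : y \in F /\ y \notin H by apply: xyFH; rewrite FHxy set22.
have FE : F = x |: (y |: H).
  by rewrite -(setID F H) (setIidPr HF) FHxy setUC setUA -setUA.
have xHy : x |: H != y |: H.
  by apply: contraNneq xy => e; have := setU11 x H; rewrite e !inE (negbTE xH) orbF.
have face z : z \in F -> z \notin H -> z |: H \in fcs K k.+1.
  move=> zF zH; rewrite inE cardsU1 zH cardH eqxx andbT.
  by apply: K_cx FK _; rewrite subUset sub1set zF.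
rewrite (big_setID [set x |: H; y |: H]) /= [X in _ + X]big1 ?addr0; last first.
  move=> G; rewrite !inE => /andP[G_xy /andP[_ /eqP cardG]].
  rewrite /incid; case: ifP => [HG|_]; rewrite ?mul0r //.
  case: ifP => [GF|_]; rewrite ?mulr0 //.
  have GF' : G \subset x |: (y |: H) by rewrite -FE.
  have cardGH : #|G| = #|H|.+1 by rewrite cardG cardH.
  by case: (setU1_between HG GF' cardGH) => GE; rewrite GE eqxx ?orbT in G_xy.
rewrite (setIidPr _); last by rewrite subUset !sub1set !face.
by rewrite big_setU1 ?big_set1 ?inE //= FE incid_setU2_cancel.
Qed.

Lemma bdm_bdm (R : comNzRingType) n (K : {set {set 'I_n}}) k :
  is_complex K -> bdm R K k *m bdm R K k.+1 = 0.
Proof.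
move=> K_cx; apply/matrixP=> a b; rewrite !mxE.
have /setIdP[_ /eqP cardH] := enum_valP a.
have /setIdP[FK /eqP cardF] := enum_valP b.
rewrite -[RHS](sum_incid_mul_eq0 R K_cx FK cardH cardF) [RHS]big_enum_val.
by apply: eq_bigr => G _; rewrite !bdmE.
Qed.

(* The coefficient of the face F in the chain c, and 0 when F is not in A. *)
Definition chain_at (R : nzRingType) (T : finType) (A : {set T})
    (c : 'cV[R]_#|A|) (F : T) : R :=
  \sum_(j | enum_val j == F) c j 0.

Lemma chain_at_enum_val (R : nzRingType) (T : finType) (A : {set T})
    (c : 'cV[R]_#|A|) j :
  chain_at c (enum_val j) = c j 0.
Proof. exact: big_inj_pred1 enum_val_inj. Qed.

Lemma chain_at_col (R : nzRingType) (T : finType) (A : {set T})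
    (f : T -> R) (F : T) :
  F \in A -> chain_at (\col_(a < #|A|) f (enum_val a)) F = f F.
Proof. by move=> FA; rewrite -(enum_rankK_in FA FA) chain_at_enum_val mxE. Qed.

Lemma tr_bdm_mulE (R : nzRingType) n (K : {set {set 'I_n}}) k
    (e : 'cV[R]_#|fcs K k|) (b : 'I_#|fcs K k.+1|) :
  ((bdm R K k)^T *m e) b 0
    = \sum_(G in fcs K k) incid R G (enum_val b) * chain_at e G.
Proof.
rewrite mxE [RHS]big_enum_val; apply: eq_bigr => a _.
by rewrite mxE bdmE chain_at_enum_val.
Qed.

Lemma Zacyclic_bdm_saturated n (K : {set {set 'I_n}}) k :
  is_complex K -> Zacyclic K k -> mx_saturated (bdm int K k).
Proof.
case: k => [|k] K_cx K_acyc c y x c_neq0 bx; first exact: K_acyc.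
apply: K_acyc => /=.
have /eqP : c *: (bdm int K k *m y) = 0.
  by rewrite scalemxAr -bx mulmxA bdm_bdm // mul0mx.
by rewrite scalemx_eq0 (negbTE c_neq0) => /eqP.
Qed.

Lemma Zacyclic_top_bdm_inj n (K : {set {set 'I_n}}) k :
    #|fcs K k.+2| = 0%N -> Zacyclic K k.+1 ->
  forall x : 'cV[int]_#|fcs K k.+1|, bdm int K k *m x = 0 -> x = 0.
Proof.
move=> no_faces K_acyc x bx0; have [b <-] := K_acyc x bx0.
suff -> : b = 0 by rewrite mulmx0.
by apply/matrixP=> j; have := ltn_ord j; rewrite {2}no_faces.
Qed.

Lemma fcs_skel_sz n (K : {set {set 'I_n}}) s k :
  (k <= s)%N -> fcs (skel_sz K s) k = fcs K k.
Proof.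
move=> ks; apply/setP=> F; rewrite !inE -andbA.
by case: (eqVneq #|F| k) => [->|]; rewrite ?ks ?andbF ?andbT.
Qed.

Lemma fcs_skel n (K : {set {set 'I_n}}) i k :
  (k <= i.+1)%N -> fcs (skel K i) k = fcs K k.
Proof. exact: fcs_skel_sz. Qed.

Lemma fcs_sub_skel_eq0 n (U K : {set {set 'I_n}}) i k :
  U \subset skel K i -> (i.+1 < k)%N -> fcs U k = set0.
Proof.
move=> UK ik; apply/setP=> F; rewrite !inE; apply/andP=> -[FU /eqP cardF].
by have /setIdP[_] := subsetP UK F FU; rewrite cardF leqNgt ik.
Qed.

Lemma laplacian_tr_bdm n (K : {set {set 'I_n}}) i :
  is_complex K -> laplacian K i *m (bdm int K i)^T = 0.
Proof.
by move=> K_cx; rewrite /laplacian -mulmxA -trmx_mul bdm_bdm // trmx0 mulmx0.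
Qed.

Theorem claim4 (n d i : nat) (D U : {set {set 'I_n}}) :
  is_complex D -> pure D d -> APC D d -> (i < d)%N ->
  spanning_tree (skel D i) i U ->
  Zacyclic U i ->
  let Theta := fcs D i.+1 :\: fcs U i.+1 in
  forall x : 'cV[int]_#|fcs D i.+1|,
    (exists c : 'cV[int]_#|fcs D i.+1|, x = laplacian D i *m c) <->
    (exists c : 'cV[int]_#|fcs D i.+1|,
        (forall j, enum_val (A := fcs D i.+1) j \notin Theta -> c j 0 = 0) /\
        x = laplacian D i *m c).
Proof.
move=> D_cx _ _ _ [[U_cx U_sub] U_skel U_acyc_top _ _] U_acyc Theta x.
split=> [[c ->]|[c [_ ->]]]; last by exists c.
have U_faces : fcs U i = fcs D i.
  by rewrite -(fcs_skel_sz U (leqnn i)) U_skel fcs_skel_sz // fcs_skel.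
have U_top : #|fcs U i.+2| = 0%N by rewrite (fcs_sub_skel_eq0 U_sub) ?cards0.
pose w : 'cV[int]_#|fcs U i.+1| := \col_b chain_at c (enum_val b).
have [u bu] := saturated_tr_surjective (Zacyclic_top_bdm_inj U_top U_acyc_top)
  (Zacyclic_bdm_saturated U_cx U_acyc) w.
pose e : 'cV[int]_#|fcs D i| := \col_a chain_at u (enum_val a).
exists (c - (bdm int D i)^T *m e); split; last first.
  by rewrite mulmxBr mulmxA laplacian_tr_bdm // mul0mx subr0.
move=> j; rewrite /Theta inE (enum_valP j) andbT negbK => FU.
move/matrixP/(_ (enum_rank_in FU (enum_val j)) 0): bu.
rewrite tr_bdm_mulE mxE enum_rankK_in // chain_at_enum_val => bu_j.
rewrite [LHS]mxE -bu_j mxE tr_bdm_mulE; apply/eqP; rewrite subr_eq0; apply/eqP.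
by apply: eq_big => [G | G GU]; rewrite ?U_faces // chain_at_col -?U_faces.
Qed.
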